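(* Let $F \in \mathbb{C}^{n \times n}$ be a unitary matrix with $|F_{ij}|^2 \leq \frac{c}{n}$ for all $i,j$ (for some constant $c>0$), let $I\in\mathbb{C}^{n\times n}$ be the identity, and let $A = [F \enspace I] \in \mathbb{C}^{n \times 2n}$. Let $1 \leq k,t \leq n$ be integers, let $\hat{x}\in\mathbb{C}^n$, let $e \in \mathbb{C}^n$ be $t$-sparse, and let $y = F\hat{x} + e$. Define $$\delta_{k,t} = \sqrt{\frac{ckt}{n}}, \quad \beta = \sqrt{\frac{\max\{k,t\}c}{n}}, \quad \theta = \frac{\sqrt{k+t}}{1- \delta_{k,t}}\beta, \quad \tau = \frac{\sqrt{1 + \delta_{k,t}}}{1 - \delta_{k,t}}.$$ If $0 < \delta_{k,t} < 1$ and $0 < \theta < 1$, then for any solution $x^{\#}$ of the Basis Pursuit problem $\min_{z \in \mathbb{C}^{2n}} \|z\|_1$ subject to $\|Az - y\|_2 \leq \|\hat{x}_{t(k)}\|_2$, writing $x^{\#} = [\hat{x}^{\#} \enspace e^{\#}]^T$ with $\hat{x}^{\#}, e^{\#}\in\mathbb{C}^n$, we have $$\|\hat{x}^{\#} - \hat{x}_{h(k)}\|_2 \leq \left(\frac{2\tau \sqrt{k+t}}{1-\theta} \left(1 + \frac{\beta}{1 - \delta_{k,t}} \right) + 2 \tau \right)\|\hat{x}_{t(k)}\|_2 .$$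
   Context: A vector is $t$-sparse if it has at most $t$ nonzero entries. For $x \in \mathbb{C}^n$, $x_{h(k)}$ denotes a $k$-sparse vector consisting of $k$ largest (in absolute value) entries of $x$ with all other entries zero, and $x_{t(k)} := x - x_{h(k)}$. *)

(* The complex field is an arbitrary numClosedFieldType C
   (e.g. algC, or R[i] for a real closed field R); real quantities live in C
   as elements with 0 <= x, ordered by C's (partial) order. *)
From HB Require Import structures.
From mathcomp Require Import all_boot all_order all_algebra.
Set Implicit Arguments. Unset Strict Implicit. Unset Printing Implicit Defensive.
Import Order.TTheory GRing.Theory Num.Theory.
Local Open Scope ring_scope.

Section Defs.
Variable C : numClosedFieldType.

Definition adjmx (m n : nat) (M : 'M[C]_(m, n)) : 'M[C]_(n, m) :=
  (map_mx Num.conj M)^T.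

(* unitary: F^* F = I (for square matrices equivalent to F F^* = I) *)
Definition unitary (n : nat) (F : 'M[C]_n) : Prop := adjmx F *m F = 1%:M.

Definition norm1 (n : nat) (v : 'cV[C]_n) : C := \sum_(i < n) `|v i 0|.
Definition norm2 (n : nat) (v : 'cV[C]_n) : C :=
  sqrtC (\sum_(i < n) `|v i 0| ^+ 2).

Definition sparse (n t : nat) (v : 'cV[C]_n) : Prop :=
  (#|[set i : 'I_n | v i ord0 != 0%R]| <= t)%N.

(* xh is "a" x_{h(k)}: the restriction of x to a set S of k indices
   carrying k largest entries in absolute value (ties broken arbitrarily). *)
Definition is_head (n k : nat) (x xh : 'cV[C]_n) : Prop :=
  exists S : {set 'I_n},
    [/\ #|S| = k,
        (forall i j, i \in S -> j \notin S -> `|x j 0| <= `|x i 0|)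
      & xh = \col_i (if i \in S then x i 0 else 0)].

Definition BP_solution (m N : nat) (A : 'M[C]_(m, N)) (y : 'cV[C]_m)
    (eta : C) (z : 'cV[C]_N) : Prop :=
  norm2 (A *m z - y) <= eta /\
  forall w : 'cV[C]_N, norm2 (A *m w - y) <= eta -> norm1 z <= norm1 w.

End Defs.

From HB Require Import structures.
From mathcomp Require Import all_boot all_order all_algebra ring.
Set Implicit Arguments. Unset Strict Implicit. Unset Printing Implicit Defensive.
Import Order.TTheory GRing.Theory Num.Theory.
Local Open Scope ring_scope.

(* Put a = xhat# - xhat_h(k) and b = e# - e, where xhat_h(k) is supported on S
   with #|S| = k and e on T with #|T| <= t. Since (xhat_h(k), e) is feasible,
   l1-minimality of x# gives the cone condition
     |a_S^c|_1 + |b_T^c|_1 <= |a_S|_1 + |b_T|_1,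
   and feasibility of both points gives |F a + b|_2 <= 2 |xhat_t(k)|_2.
   Coherence |F_ij| <= sqrt(c/n) makes [F I] a (1 +- delta)-isometry on vectors
   supported on S + T, and beta-almost orthogonal (per unit of l1 mass) between
   such vectors and the rest; this yields the robust null space property
     (1 - delta) |(a_S, b_T)|_2
       <= sqrt(1 + delta) |F a + b|_2 + beta (|a_S^c|_1 + |b_T^c|_1).
   The cone condition and |(a_S, b_T)|_1 <= sqrt(k + t) |(a_S, b_T)|_2 then
   bound the l1 tail, hence |a|_2. *)

Section NumField.
Variable R : numFieldType.

Lemma ler_sum_sqr (I : finType) (P : pred I) (g : I -> R) :
  (forall i, 0 <= g i) -> \sum_(i | P i) g i ^+ 2 <= (\sum_(i | P i) g i) ^+ 2.
Proof.
move=> g0; rewrite [leRHS]expr2 mulr_suml; apply: ler_sum => i Pi.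
by rewrite expr2 ler_wpM2l // (bigD1 i) //= ler_wpDr // sumr_ge0.
Qed.

Lemma ler_pdivr_comb (p d r N beta L : R) : 0 < d ->
  p * d <= r * N + beta * L -> p <= r / d * N + beta / d * L.
Proof.
move=> d_gt0 p_le; rewrite -(ler_pM2r d_gt0) (_ : (_ + _) * d = r * N + beta * L) //.
by field; rewrite lt0r_neq0.
Qed.

Lemma recovery_bound (x p L N eta s tau g : R) :
  0 <= tau -> 0 <= g -> 0 <= s -> s * g < 1 ->
  x <= p + L -> p <= tau * N + g * L -> L <= s * p -> N <= 2 * eta ->
  x <= (2 * tau * s / (1 - s * g) * (1 + g) + 2 * tau) * eta.
Proof.
move=> tau0 g0 s0 sg1 x_le p_le L_le N_le.
have sg_gt0 : 0 < 1 - s * g by rewrite subr_gt0.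
have L_le' : L <= s * tau * N / (1 - s * g).
  rewrite ler_pdivlMr // mulrBr mulr1 lerBlDr.
  rewrite (_ : _ + _ = s * (tau * N + g * L)); last by ring.
  by apply: le_trans L_le _; rewrite ler_wpM2l.
apply: le_trans x_le _; apply: le_trans (lerD p_le (lexx L)) _.
rewrite -addrA -{2}[L]mul1r -mulrDl.
rewrite [leRHS](_ : _ = tau * (2 * eta)
                         + (g + 1) * (s * tau * (2 * eta) / (1 - s * g))); last by ring.
rewrite lerD ?ler_wpM2l ?addr_ge0 ?ler01 //.
apply: le_trans L_le' _.
by rewrite ler_pM2r ?invr_gt0 // ler_wpM2l ?mulr_ge0.
Qed.

End NumField.

Section NumClosedField.
Variable C : numClosedFieldType.

Lemma CauchySchwarz_sum (I : finType) (P : pred I) (p q : I -> C) :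
  (forall i, 0 <= p i) -> (forall i, 0 <= q i) ->
  \sum_(i | P i) p i * q i <=
    sqrtC (\sum_(i | P i) p i ^+ 2) * sqrtC (\sum_(i | P i) q i ^+ 2).
Proof.
move=> p0 q0; set X := sqrtC _; set Y := sqrtC _.
have sqrtC_sum_eq0 (g : I -> C) : (forall i, 0 <= g i) ->
    sqrtC (\sum_(i | P i) g i ^+ 2) = 0 -> forall i, P i -> g i = 0.
  move=> g0 /eqP; rewrite sqrtC_eq0 => /eqP sum0 i Pi.
  have /eqP := psumr_eq0P (fun j _ => exprn_ge0 2 (g0 j)) sum0 Pi.
  by rewrite expf_eq0 => /eqP.
have X_ge0 : 0 <= X by rewrite sqrtC_ge0 sumr_ge0 // => i _; rewrite exprn_ge0.
have Y_ge0 : 0 <= Y by rewrite sqrtC_ge0 sumr_ge0 // => i _; rewrite exprn_ge0.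
have [X0|X0] := eqVneq X 0.
  rewrite big1 ?mulr_ge0 // => i /(sqrtC_sum_eq0 _ p0 X0) ->.
  by rewrite mul0r.
have [Y0|Y0] := eqVneq Y 0.
  rewrite big1 ?mulr_ge0 // => i /(sqrtC_sum_eq0 _ q0 Y0) ->.
  by rewrite mulr0.
have XY0 : 0 < X * Y by rewrite mulr_gt0 // lt0r ?X0 ?Y0.
(* Expanding [0 <= \sum_i (p_i Y - q_i X)^2] gives [2 X Y (X Y - \sum_i p_i q_i)]. *)
have : 0 <= \sum_(i | P i) (p i * Y - q i * X) ^+ 2.
  by apply: sumr_ge0 => i _; rewrite -realEsqr rpredB ?rpredM ?ger0_real.
have -> : \sum_(i | P i) (p i * Y - q i * X) ^+ 2 =
    2 * (X * Y) * (X * Y - \sum_(i | P i) p i * q i).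
  rewrite (eq_bigr (fun i => p i ^+ 2 * Y ^+ 2 + q i ^+ 2 * X ^+ 2
                             - 2 * (X * Y) * (p i * q i))); last by move=> i _; ring.
  have X2 : X ^+ 2 = \sum_(i | P i) p i ^+ 2 by rewrite sqrtCK.
  have Y2 : Y ^+ 2 = \sum_(i | P i) q i ^+ 2 by rewrite sqrtCK.
  by rewrite sumrB big_split /= -!mulr_suml -mulr_sumr -X2 -Y2; ring.
by rewrite pmulr_rge0 ?subr_ge0 // mulr_gt0.
Qed.

Lemma CauchySchwarz2 (a b x y : C) : 0 <= a -> 0 <= b -> 0 <= x -> 0 <= y ->
  a * x + b * y <= sqrtC (a ^+ 2 + b ^+ 2) * sqrtC (x ^+ 2 + y ^+ 2).
Proof.
move=> a0 b0 x0 y0.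
have := @CauchySchwarz_sum _ xpredT (fun i : bool => if i then a else b)
  (fun i : bool => if i then x else y).
by rewrite !big_bool; apply; case.
Qed.

Lemma sqrtC_mul_nat_le (x : C) (m M : nat) : 0 <= x -> (m <= M)%N ->
  sqrtC x * sqrtC m%:R <= sqrtC (M%:R * x).
Proof.
move=> x0 mM; rewrite -sqrtCM ?nnegrE ?ler0n // mulrC.
by rewrite ler_sqrtC ?nnegrE ?mulr_ge0 ?ler0n // ler_wpM2r // ler_nat.
Qed.

Lemma le_sqrtC_sqr (x y : C) : 0 <= x -> x ^+ 2 <= y -> x <= sqrtC y.
Proof.
move=> x0 xy; rewrite -(sqrCK x0) ler_sqrtC ?nnegrE ?exprn_ge0 //.
exact: le_trans (exprn_ge0 2 x0) xy.
Qed.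

End NumClosedField.

Section Vectors.
Variables (C : numClosedFieldType) (n : nat).
Implicit Types (u w : 'cV[C]_n) (S : {set 'I_n}).

Definition sqnorm2 u := \sum_(i < n) `|u i 0| ^+ 2.
Definition dotv u w := \sum_(i < n) u i 0 * (w i 0)^*.
Definition restr S u : 'cV[C]_n := \col_i (if i \in S then u i 0 else 0).
Definition norm1_on S u := \sum_(i in S) `|u i 0|.
Definition supp u := [set i | u i 0 != 0].

Lemma norm2E u : norm2 u = sqrtC (sqnorm2 u).
Proof. by []. Qed.

Lemma sqnorm2_ge0 u : 0 <= sqnorm2 u.
Proof. by apply: sumr_ge0 => i _; rewrite exprn_ge0. Qed.

Lemma norm2_ge0 u : 0 <= norm2 u.
Proof. by rewrite sqrtC_ge0 sqnorm2_ge0. Qed.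

Lemma norm2_sqr u : norm2 u ^+ 2 = sqnorm2 u.
Proof. exact: sqrtCK. Qed.

Lemma norm1_on_ge0 S u : 0 <= norm1_on S u.
Proof. exact: sumr_ge0. Qed.

Lemma dotvv u : dotv u u = sqnorm2 u.
Proof. by apply: eq_bigr => i _; rewrite normCK. Qed.

Lemma dotvC u w : dotv w u = (dotv u w)^*.
Proof.
by rewrite /dotv rmorph_sum; apply: eq_bigr => i _; rewrite rmorphM /= conjCK mulrC.
Qed.

Lemma dotvDl u u' w : dotv (u + u') w = dotv u w + dotv u' w.
Proof. by rewrite -big_split; apply: eq_bigr => i _; rewrite mxE mulrDl. Qed.

Lemma dotvDr u w w' : dotv u (w + w') = dotv u w + dotv u w'.
Proof. by rewrite -big_split; apply: eq_bigr => i _; rewrite mxE rmorphD mulrDr. Qed.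

Lemma sqnorm2D u w :
  sqnorm2 (u + w) = sqnorm2 u + sqnorm2 w + 2 * 'Re (dotv u w).
Proof.
rewrite ReE mulrC divfK ?pnatr_eq0 // -!dotvv dotvDl !dotvDr (dotvC u w).
ring.
Qed.

Lemma normC_dotv_le u w : `|dotv u w| <= norm2 u * norm2 w.
Proof.
apply: le_trans (ler_norm_sum _ _ _) _.
under eq_bigr do rewrite normrM norm_conjC.
exact: CauchySchwarz_sum.
Qed.

Lemma norm2D u w : norm2 (u + w) <= norm2 u + norm2 w.
Proof.
rewrite norm2E -(sqrCK (addr_ge0 (norm2_ge0 u) (norm2_ge0 w))).
rewrite ler_sqrtC ?nnegrE ?sqnorm2_ge0 ?exprn_ge0 ?addr_ge0 ?norm2_ge0 //.
rewrite sqnorm2D sqrrD !norm2_sqr [leRHS]addrAC lerD2l.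
rewrite mulr_natl lerMn2r /=.
exact: le_trans (leif_Re_Creal _) (normC_dotv_le u w).
Qed.

Lemma norm2N u : norm2 (- u) = norm2 u.
Proof. by congr sqrtC; apply: eq_bigr => i _; rewrite mxE normrN. Qed.

Lemma restrE S u i : restr S u i 0 = if i \in S then u i 0 else 0.
Proof. by rewrite mxE. Qed.

Lemma restr_split S u : u = restr S u + restr (~: S) u.
Proof.
apply/matrixP => i j; rewrite (ord1 j) !mxE in_setC.
by case: (i \in S); rewrite ?addr0 ?add0r.
Qed.

Lemma sum_restr S (g : C -> C) u : g 0 = 0 ->
  \sum_(i < n) g (restr S u i 0) = \sum_(i in S) g (u i 0).
Proof.
move=> g0; rewrite [RHS]big_mkcond; apply: eq_bigr => i _.
by rewrite restrE; case: (i \in S).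
Qed.

Lemma sqnorm2_restr S u : sqnorm2 (restr S u) = \sum_(i in S) `|u i 0| ^+ 2.
Proof. by apply: (@sum_restr S (fun x => `|x| ^+ 2)); rewrite normr0 expr0n. Qed.

Lemma norm1_restr S u : norm1 (restr S u) = norm1_on S u.
Proof. by apply: (@sum_restr S (fun x => `|x|)); rewrite normr0. Qed.

Lemma dotv_restrC S u w : dotv (restr S u) (restr (~: S) w) = 0.
Proof.
apply: big1 => i _; rewrite !restrE in_setC.
by case: (i \in S); rewrite ?mul0r ?conjC0 ?mulr0.
Qed.

Lemma norm1_on_le_sqrt S u k : (#|S| <= k)%N ->
  norm1_on S u <= sqrtC k%:R * norm2 (restr S u).
Proof.
move=> Sk; have := @CauchySchwarz_sum C _ (mem S) (fun i => `|u i 0|) (fun=> 1).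
rewrite norm2E sqnorm2_restr.
under eq_bigr do rewrite mulr1.
under [X in _ * sqrtC X]eq_bigr do rewrite expr1n.
rewrite sumr_const => /(_ (fun=> normr_ge0 _) (fun=> ler01)) /le_trans; apply.
rewrite mulrC; apply: ler_wpM2r.
  by rewrite sqrtC_ge0 sumr_ge0 // => i _; rewrite exprn_ge0.
by rewrite ler_sqrtC ?nnegrE // ler_nat.
Qed.

Lemma norm2_restr_le_norm1_on S u : norm2 (restr S u) <= norm1_on S u.
Proof.
rewrite norm2E -(sqrCK (norm1_on_ge0 S u)).
rewrite ler_sqrtC ?nnegrE ?sqnorm2_ge0 ?exprn_ge0 ?norm1_on_ge0 //.
by rewrite sqnorm2_restr; apply: ler_sum_sqr.
Qed.

Lemma norm2_le_restr S u : norm2 u <= norm2 (restr S u) + norm1_on (~: S) u.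
Proof.
rewrite {1}(restr_split S u); apply: le_trans (norm2D _ _) _.
by rewrite lerD2l norm2_restr_le_norm1_on.
Qed.

Lemma norm1_on_cone S u d : supp u \subset S ->
  norm1 u - norm1 (u + d) <= norm1_on S d - norm1_on (~: S) d.
Proof.
move=> /subsetP uS; rewrite -sumrB (bigID (mem S)) /= /norm1_on.
rewrite [X in _ - X](eq_bigl (fun i => i \notin S)) => [|i]; last by rewrite in_setC.
rewrite -sumrN; apply: lerD; apply: ler_sum => i iS.
  by rewrite mxE lerBlDl -lerBlDr lerB_normD.
have : i \notin supp u by apply: contra iS => /uS.
rewrite inE negbK => /eqP u0.
by rewrite mxE u0 add0r normr0 sub0r.
Qed.

Lemma adjmxM m p (M : 'M[C]_(m, n)) (N : 'M[C]_(n, p)) :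
  adjmx (M *m N) = adjmx N *m adjmx M.
Proof. by rewrite /adjmx map_mxM trmx_mul. Qed.

Lemma dotv_mx u w : dotv u w = (adjmx w *m u) 0 0.
Proof. by rewrite mxE; apply: eq_bigr => i _; rewrite !mxE mulrC. Qed.

Lemma dotv_unitary (F : 'M[C]_n) u w :
  unitary F -> dotv (F *m u) (F *m w) = dotv u w.
Proof. by move=> FU; rewrite !dotv_mx adjmxM -mulmxA (mulmxA (adjmx F)) FU mul1mx. Qed.

Lemma sqnorm2_unitary (F : 'M[C]_n) u : unitary F -> sqnorm2 (F *m u) = sqnorm2 u.
Proof. by move=> FU; rewrite -!dotvv dotv_unitary. Qed.

Lemma norm2_unitary (F : 'M[C]_n) u : unitary F -> norm2 (F *m u) = norm2 u.
Proof. by move=> FU; rewrite !norm2E sqnorm2_unitary. Qed.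

Lemma normC_dotv_coherence (F : 'M[C]_n) (mu : C) u w :
  (forall i j, `|F i j| <= mu) -> `|dotv (F *m u) w| <= mu * norm1 u * norm1 w.
Proof.
move=> Fmu; apply: le_trans (ler_norm_sum _ _ _) _.
rewrite mulr_sumr; apply: ler_sum => j _.
rewrite normrM norm_conjC ler_wpM2r // mxE.
apply: le_trans (ler_norm_sum _ _ _) _; rewrite mulr_sumr; apply: ler_sum => i _.
by rewrite normrM ler_wpM2r.
Qed.

End Vectors.

Section RobustNullSpaceProperty.
Variables (C : numClosedFieldType) (n k t : nat) (F : 'M[C]_n) (mu delta beta : C).
Variables (S T : {set 'I_n}) (a b : 'cV[C]_n).
Hypotheses (F_unitary : unitary F) (F_coherent : forall i j, `|F i j| <= mu).
Hypotheses (mu_ge0 : 0 <= mu) (delta_ge : mu * sqrtC k%:R * sqrtC t%:R <= delta).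
Hypotheses (beta_ge_k : mu * sqrtC k%:R <= beta) (beta_ge_t : mu * sqrtC t%:R <= beta).
Hypotheses (S_card : (#|S| <= k)%N) (T_card : (#|T| <= t)%N).

Local Notation a0 := (restr S a).
Local Notation b0 := (restr T b).
Local Notation a1 := (restr (~: S) a).
Local Notation b1 := (restr (~: T) b).
Local Notation P := (sqnorm2 a0 + sqnorm2 b0).
Local Notation L := (norm1_on (~: S) a + norm1_on (~: T) b).

Let sqrt_nat_ge0 m : 0 <= sqrtC m%:R :> C.
Proof. by rewrite sqrtC_ge0 ler0n. Qed.

Let delta_ge0 : 0 <= delta.
Proof. by apply: le_trans delta_ge; rewrite !mulr_ge0. Qed.

Let beta_ge0 : 0 <= beta.
Proof. by apply: le_trans beta_ge_k; rewrite mulr_ge0. Qed.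

Let P_ge0 : 0 <= P.
Proof. by rewrite addr_ge0 ?sqnorm2_ge0. Qed.

Let L_ge0 : 0 <= L.
Proof. by rewrite addr_ge0 ?norm1_on_ge0. Qed.

Lemma normC_dot_head_le :
  `|dotv (F *m a0) b0| <= delta * (norm2 a0 * norm2 b0).
Proof.
apply: le_trans (normC_dotv_coherence _ _ F_coherent) _.
rewrite !norm1_restr.
apply: le_trans (_ : _ <= mu * (sqrtC k%:R * norm2 a0) * (sqrtC t%:R * norm2 b0)) _.
  by rewrite ler_pM ?mulr_ge0 ?norm1_on_ge0 ?ler_wpM2l ?norm1_on_le_sqrt.
rewrite (_ : _ * _ = mu * sqrtC k%:R * sqrtC t%:R * (norm2 a0 * norm2 b0));
  last by ring.
by rewrite ler_wpM2r ?mulr_ge0 ?norm2_ge0.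
Qed.

Lemma normC_twice_Re_head_le : `|2 * 'Re (dotv (F *m a0) b0)| <= delta * P.
Proof.
rewrite normrM normr_nat.
have ReC := le_trans (leif_normC_Re_Creal _) normC_dot_head_le.
apply: le_trans (ler_wpM2l (ler0n _ 2) ReC) _.
rewrite mulrCA ler_wpM2l // -!norm2_sqr mulr_natl.
exact: real_leif_mean_square_scaled (ger0_real (norm2_ge0 _)) (ger0_real (norm2_ge0 _)).
Qed.

Lemma sqnorm2_head : sqnorm2 (F *m a0 + b0) = P + 2 * 'Re (dotv (F *m a0) b0).
Proof. by rewrite sqnorm2D sqnorm2_unitary. Qed.

Let twice_Re_real : 2 * 'Re (dotv (F *m a0) b0) \is Num.real.
Proof. by rewrite rpredM ?Creal_Re ?realn. Qed.

Lemma sqnorm2_head_ge : P * (1 - delta) <= sqnorm2 (F *m a0 + b0).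
Proof.
rewrite sqnorm2_head mulrBr mulr1 mulrC lerD2l.
exact: real_lerNnormlW normC_twice_Re_head_le.
Qed.

Lemma norm2_head_le : norm2 (F *m a0 + b0) <= sqrtC (1 + delta) * sqrtC P.
Proof.
rewrite norm2E -sqrtCM ?nnegrE ?addr_ge0 ?sqnorm2_ge0 //.
rewrite ler_sqrtC ?nnegrE ?mulr_ge0 ?addr_ge0 ?sqnorm2_ge0 //.
rewrite sqnorm2_head [leRHS]mulrDl mul1r lerD2l.
exact: real_ler_normlW twice_Re_real normC_twice_Re_head_le.
Qed.

Let mu_norm1_head_le (U : {set 'I_n}) m (u : 'cV[C]_n) :
  (#|U| <= m)%N -> mu * sqrtC m%:R <= beta ->
  norm2 (restr U u) <= sqrtC P -> mu * norm1_on U u <= beta * sqrtC P.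
Proof.
move=> Um mu_m u_le; apply: le_trans (_ : _ <= mu * sqrtC m%:R * norm2 (restr U u)) _.
  by rewrite -mulrA ler_wpM2l // norm1_on_le_sqrt.
by rewrite ler_pM ?mulr_ge0 ?norm2_ge0.
Qed.

Lemma normC_dot_head_tail_le :
  `|dotv (F *m a0 + b0) (F *m a1 + b1)| <= beta * sqrtC P * L.
Proof.
have -> : dotv (F *m a0 + b0) (F *m a1 + b1) =
    (dotv (F *m a1) b0)^* + dotv (F *m a0) b1.
  rewrite !dotvDl !dotvDr dotv_unitary // !dotv_restrC (dotvC (F *m a1)).
  by rewrite add0r addr0 addrC.
apply: le_trans (ler_normD _ _) _; rewrite norm_conjC mulrDr.
have a0_le : norm2 a0 <= sqrtC P.
  by rewrite norm2E ler_sqrtC ?nnegrE ?sqnorm2_ge0 // lerDl sqnorm2_ge0.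
have b0_le : norm2 b0 <= sqrtC P.
  by rewrite norm2E ler_sqrtC ?nnegrE ?sqnorm2_ge0 // lerDr sqnorm2_ge0.
apply: lerD; apply: le_trans (normC_dotv_coherence _ _ F_coherent) _;
  rewrite !norm1_restr.
  by rewrite mulrAC ler_wpM2r ?norm1_on_ge0 ?(mu_norm1_head_le T_card).
by rewrite ler_wpM2r ?norm1_on_ge0 ?(mu_norm1_head_le S_card).
Qed.

Lemma robust_null_space_property :
  sqrtC P * (1 - delta) <= sqrtC (1 + delta) * norm2 (F *m a + b) + beta * L.
Proof.
set p := sqrtC P; set X := F *m a0 + b0; set Y := F *m a1 + b1.
have p_ge0 : 0 <= p by rewrite sqrtC_ge0.
have XY : F *m a + b = X + Y.
  by rewrite {1}(restr_split S a) {1}(restr_split T b) mulmxDr addrACA.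
have sqX : sqnorm2 X = dotv X (F *m a + b) - dotv X Y.
  by rewrite XY dotvDr dotvv addrK.
have : P * (1 - delta) <= p * (sqrtC (1 + delta) * norm2 (F *m a + b) + beta * L).
  apply: le_trans sqnorm2_head_ge _.
  rewrite -(ger0_norm (sqnorm2_ge0 X)) sqX.
  apply: le_trans (ler_normB _ _) _; rewrite mulrDr.
  apply: lerD; rewrite mulrCA mulrA.
    apply: le_trans (normC_dotv_le _ _) _.
    by apply: ler_wpM2r; [exact: norm2_ge0 | exact: norm2_head_le].
  exact: normC_dot_head_tail_le.
have [-> _|p_neq0] := eqVneq p 0.
  by rewrite mul0r addr_ge0 ?mulr_ge0 ?norm2_ge0 // sqrtC_ge0 addr_ge0 ?ler01.
have P_pp : P = p * p by rewrite -expr2 sqrtCK.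
have p_gt0 : 0 < p by rewrite lt0r p_neq0.
by move=> h; rewrite -(ler_pM2l p_gt0) mulrA -P_pp.
Qed.

Lemma norm1_head_le : norm1_on S a + norm1_on T b <= sqrtC (k + t)%:R * sqrtC P.
Proof.
apply: le_trans (lerD (norm1_on_le_sqrt a S_card) (norm1_on_le_sqrt b T_card)) _.
apply: le_trans (CauchySchwarz2 _ _ (norm2_ge0 _) (norm2_ge0 _)) _;
  rewrite ?sqrtC_ge0 ?ler0n //.
by rewrite !sqrtCK ?ler0n // -natrD.
Qed.

Lemma norm2_le_head_tail : norm2 a <= sqrtC P + L.
Proof.
apply: le_trans (norm2_le_restr S a) _; rewrite lerD //.
  by rewrite norm2E ler_sqrtC ?nnegrE ?sqnorm2_ge0 // lerDl sqnorm2_ge0.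
by rewrite lerDl norm1_on_ge0.
Qed.

End RobustNullSpaceProperty.

Section BasisPursuit.
Variables (C : numClosedFieldType) (n : nat) (F : 'M[C]_n).
Variables (xhat e xh : 'cV[C]_n) (xs : 'cV[C]_(n + n)).
Hypotheses (F_unitary : unitary F)
  (xs_BP : BP_solution (row_mx F 1%:M) (F *m xhat + e) (norm2 (xhat - xh)) xs).

Lemma norm1_col_mx (u w : 'cV[C]_n) : norm1 (col_mx u w) = norm1 u + norm1 w.
Proof.
by rewrite /norm1 big_split_ord; congr (_ + _); apply: eq_bigr => i _;
  rewrite ?col_mxEu ?col_mxEd.
Qed.

Lemma bp_tube :
  norm2 (F *m (usubmx xs - xh) + (dsubmx xs - e)) <= 2 * norm2 (xhat - xh).
Proof.
have -> : F *m (usubmx xs - xh) + (dsubmx xs - e) =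
    (row_mx F 1%:M *m xs - (F *m xhat + e)) + F *m (xhat - xh).
  rewrite -{3}(vsubmxK xs) mul_row_col mul1mx !mulmxBr opprD addrACA.
  by rewrite -[RHS]addrA; congr (_ + _); rewrite addrACA addNr add0r addrC.
apply: le_trans (norm2D _ _) _.
by rewrite norm2_unitary // mulr2n mulrDl mul1r lerD // xs_BP.1.
Qed.

Lemma bp_norm1_le : norm1 (usubmx xs) + norm1 (dsubmx xs) <= norm1 xh + norm1 e.
Proof.
rewrite -!norm1_col_mx vsubmxK; apply: xs_BP.2.
rewrite mul_row_col mul1mx opprD addrACA subrr addr0 -mulmxBr norm2_unitary //.
by rewrite -norm2N opprB.
Qed.

Lemma bp_cone (S T : {set 'I_n}) : supp xh \subset S -> supp e \subset T ->
  norm1_on (~: S) (usubmx xs - xh) + norm1_on (~: T) (dsubmx xs - e) <=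
  norm1_on S (usubmx xs - xh) + norm1_on T (dsubmx xs - e).
Proof.
move=> xhS eT.
have := lerD (norm1_on_cone (usubmx xs - xh) xhS) (norm1_on_cone (dsubmx xs - e) eT).
rewrite !subrKC addrACA -opprD; have := bp_norm1_le; rewrite -subr_ge0.
by move=> /le_trans/[apply]; rewrite addrACA -opprD subr_ge0.
Qed.

End BasisPursuit.

Lemma coherence_parameters (C : numClosedFieldType) (n k t : nat)
    (F : 'M[C]_n) (c : C) :
  0 < c -> (forall i j, `|F i j| ^+ 2 <= c / n%:R) ->
  let mu := sqrtC (c / n%:R) in
  [/\ 0 <= mu, forall i j, `|F i j| <= mu,
      mu * sqrtC k%:R * sqrtC t%:R <= sqrtC (c * k%:R * t%:R / n%:R),
      mu * sqrtC k%:R <= sqrtC ((maxn k t)%:R * c / n%:R)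
    & mu * sqrtC t%:R <= sqrtC ((maxn k t)%:R * c / n%:R)].
Proof.
move=> c_gt0 F_le mu; have cn_ge0 : 0 <= c / n%:R by rewrite divr_ge0 ?ler0n ?ltW.
split; rewrite ?sqrtC_ge0 //.
- by move=> i j; apply: le_sqrtC_sqr.
- rewrite -sqrtCM ?nnegrE ?ler0n // -sqrtCM ?nnegrE ?ler0n ?(mulr_ge0 cn_ge0) //.
  by rewrite (_ : _ * _ = c * k%:R * t%:R / n%:R) //; ring.
- by rewrite -mulrA sqrtC_mul_nat_le // leq_maxl.
- by rewrite -mulrA sqrtC_mul_nat_le // leq_maxr.
Qed.

Theorem theorem2 (C : numClosedFieldType) (n : nat) (F : 'M[C]_n) (c : C)
  (k t : nat) (xhat e : 'cV[C]_n) (xh : 'cV[C]_n) (xs : 'cV[C]_(n + n)) :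
  unitary F ->
  0 < c ->
  (forall i j, `|F i j| ^+ 2 <= c / n%:R) ->
  (1 <= k <= n)%N -> (1 <= t <= n)%N ->
  sparse t e ->
  is_head k xhat xh ->
  let A : 'M[C]_(n, n + n) := row_mx F 1%:M in
  let y := F *m xhat + e in
  let delta := sqrtC (c * k%:R * t%:R / n%:R) in
  let beta := sqrtC ((maxn k t)%:R * c / n%:R) in
  let theta := sqrtC (k + t)%:R / (1 - delta) * beta in
  let tau := sqrtC (1 + delta) / (1 - delta) in
  0 < delta < 1 -> 0 < theta < 1 ->
  BP_solution A y (norm2 (xhat - xh)) xs ->
  norm2 (usubmx xs - xh) <=
    (2 * tau * sqrtC (k + t)%:R / (1 - theta) * (1 + beta / (1 - delta))
       + 2 * tau) * norm2 (xhat - xh).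
Proof.
move=> F_unitary c_gt0 F_le _ _ e_sparse [S [S_card _ xh_def]] A y delta beta theta tau.
move=> /andP[delta_gt0 delta_lt1] /andP[_ theta_lt1] xs_BP.
have [mu_ge0 F_coherent delta_ge beta_ge_k beta_ge_t] :=
  coherence_parameters k t c_gt0 F_le.
have xh_supp : supp xh \subset S.
  by apply/subsetP => i; rewrite xh_def inE mxE; case: (i \in S); rewrite ?eqxx.
have S_le : (#|S| <= k)%N by rewrite S_card.
set a := usubmx xs - xh; set b := dsubmx xs - e.
have nsp := robust_null_space_property a b F_unitary F_coherent mu_ge0 delta_ge
  beta_ge_k beta_ge_t S_le e_sparse.
have theta_E : theta = sqrtC (k + t)%:R * (beta / (1 - delta)).
  by rewrite /theta mulrA mulrAC.
have delta_lt : 0 < 1 - delta by rewrite subr_gt0.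
have beta_ge0 : 0 <= beta.
  by apply: le_trans beta_ge_k; rewrite mulr_ge0 // sqrtC_ge0 ler0n.
rewrite theta_E in theta_lt1 *.
have cone := le_trans (bp_cone F_unitary xs_BP xh_supp (subxx _))
  (norm1_head_le a b S_le e_sparse).
apply: (recovery_bound _ _ _ theta_lt1 (norm2_le_head_tail S _ a b)
  (ler_pdivr_comb delta_lt nsp) cone (bp_tube F_unitary xs_BP)).
- apply: divr_ge0 (ltW delta_lt).
  by rewrite sqrtC_ge0 addr_ge0 ?ler01 ?(ltW delta_gt0).
- by rewrite divr_ge0 ?(ltW delta_lt).
- by rewrite sqrtC_ge0 ler0n.
Qed.
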